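(* Let $\mathcal{G}=(G,\odot,\leq)$ be a real continuous Alo-group with $G$ an open interval of $\mathbb{R}$ and identity $e$. The function $d_{[\mathcal{G}]}:[G]\times[G]\to G$, $$d_{[\mathcal{G}]}(\tilde a,\tilde b)=\max\{\|a^-\div b^-\|_{\mathcal{G}},\ \|a^+\div b^+\|_{\mathcal{G}}\}$$ (the $[\mathcal{G}]$-norm of the pair $[a^-\div b^-,a^+\div b^+]$), is a $[\mathcal{G}]$-distance, i.e. for all $\tilde a,\tilde b,\tilde c\in[G]$: (1) $d_{[\mathcal{G}]}(\tilde a,\tilde b)\geq e$; (2) $d_{[\mathcal{G}]}(\tilde a,\tilde b)=e\iff\tilde a=\tilde b$; (3) $d_{[\mathcal{G}]}(\tilde a,\tilde b)=d_{[\mathcal{G}]}(\tilde b,\tilde a)$; (4) $d_{[\mathcal{G}]}(\tilde a,\tilde b)\leq d_{[\mathcal{G}]}(\tilde a,\tilde c)\odot d_{[\mathcal{G}]}(\tilde c,\tilde b)$.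
   Context: An Alo-group $(G,\odot,\leq)$ is an Abelian group with a weak order $\leq$ such that $a\leq b\Rightarrow a\odot c\leq b\odot c$; real means $G\subseteq\mathbb{R}$ with the usual order, continuous means $\odot$ is continuous. $a^{(-1)}$ is the inverse of $a$, $a\div b=a\odot b^{(-1)}$, and $\|a\|_{\mathcal{G}}=\max\{a,a^{(-1)}\}$. $[G]=\{[a^-,a^+]: a^-,a^+\in G,\ a^-\leq a^+\}$, with $\tilde a=[a^-,a^+]$ etc.; two intervals are equal iff both endpoints coincide. *)

From HB Require Import structures.
From mathcomp Require Import all_boot all_order all_algebra.
From mathcomp Require Import all_classical all_reals all_analysis.
Set Implicit Arguments. Unset Strict Implicit. Unset Printing Implicit Defensive.
Import Order.TTheory GRing.Theory Num.Theory.
Import numFieldNormedType.Exports.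
Local Open Scope classical_set_scope.
Local Open Scope ring_scope.

Section AloGroup.
Variable R : realType.

Definition real_alo_group (G : set R) (op : R -> R -> R) (e : R) (inv : R -> R) : Prop :=
  (forall a b, G a -> G b -> G (op a b)) /\
      G e /\
      (forall a, G a -> G (inv a)) /\
      (forall a b c, G a -> G b -> G c -> op (op a b) c = op a (op b c)) /\
      (forall a b, G a -> G b -> op a b = op b a) /\
      (forall a, G a -> op a e = a) /\
      (forall a, G a -> op a (inv a) = e) /\
      (forall a b c, G a -> G b -> G c -> a <= b -> op a c <= op b c).

Definition continuous_op (G : set R) (op : R -> R -> R) : Prop :=
  forall p : R * R, G p.1 -> G p.2 ->
    (fun q : R * R => op q.1 q.2) @ within [set q : R * R | G q.1 /\ G q.2] (nbhs p)
      --> op p.1 p.2.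

Definition open_interval (G : set R) : Prop := open G /\ is_interval G.

Definition alo_div (op : R -> R -> R) (inv : R -> R) (a b : R) : R := op a (inv b).
Definition alo_norm (inv : R -> R) (a : R) : R := Num.max a (inv a).

(* [G]: pairs (a^-, a^+) of elements of G with a^- <= a^+ *)
Definition interval_G (G : set R) (x : R * R) : Prop := G x.1 /\ G x.2 /\ x.1 <= x.2.

Definition dist_IG (op : R -> R -> R) (inv : R -> R) (a b : R * R) : R :=
  Num.max (alo_norm inv (alo_div op inv a.1 b.1)) (alo_norm inv (alo_div op inv a.2 b.2)).

End AloGroup.

(** The [[G]]-distance is the maximum of the Alo-distances
    [d(x, y) = ||x ÷ y||] of the lower and of the upper endpoints.  [d] is a
    [G]-valued metric: symmetry comes from [(x ÷ y)^(-1) = y ÷ x], the triangle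
    inequality from [x ÷ y = (x ÷ z) ⊙ (z ÷ y)] and the subadditivity
    [||x ⊙ y|| <= ||x|| ⊙ ||y||], which holds because [^(-1)] is a morphism and
    [⊙] is monotone in both arguments.  That monotonicity also carries the
    triangle inequality over to the componentwise maximum. *)
From HB Require Import structures.
From mathcomp Require Import all_boot all_order all_algebra.
From mathcomp Require Import all_classical all_reals all_analysis.
Import Order.TTheory GRing.Theory Num.Theory.
Import numFieldNormedType.Exports.
Local Open Scope ring_scope.
Set Implicit Arguments. Unset Strict Implicit.

Section RealAloGroup.
Variables (R : realType) (G : set R) (op : R -> R -> R) (e : R) (inv : R -> R).
Hypothesis aloG : real_alo_group G op e inv.

Let opG : forall {a b}, G a -> G b -> G (op a b). Proof. by case: aloG. Qed.
Let eG : G e. Proof. by case: aloG => _ []. Qed.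
Let invG : forall {a}, G a -> G (inv a). Proof. by case: aloG => _ [_ []]. Qed.
Let opA : forall {a b c}, G a -> G b -> G c -> op (op a b) c = op a (op b c).
Proof. by case: aloG => _ [_ [_ []]]. Qed.
Let opC : forall {a b}, G a -> G b -> op a b = op b a.
Proof. by case: aloG => _ [_ [_ [_ []]]]. Qed.
Let mulo1 : forall {a}, G a -> op a e = a.
Proof. by case: aloG => _ [_ [_ [_ [_ []]]]]. Qed.
Let muloV : forall {a}, G a -> op a (inv a) = e.
Proof. by case: aloG => _ [_ [_ [_ [_ [_ []]]]]]. Qed.
Let ler_opl : forall {a b c}, G a -> G b -> G c -> a <= b -> op a c <= op b c.
Proof. by case: aloG => _ [_ [_ [_ [_ [_ []]]]]]. Qed.

Lemma mul1o a : G a -> op e a = a.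
Proof. by move=> Ga; rewrite opC // mulo1. Qed.

Lemma invo_uniq a b : G a -> G b -> op a b = e -> b = inv a.
Proof.
move=> Ga Gb ab_e; have Gia := invG Ga.
by rewrite -[b]mulo1 // -(muloV Ga) -opA // [op b a]opC // ab_e mul1o.
Qed.

Lemma invoK a : G a -> inv (inv a) = a.
Proof.
move=> Ga; have Gia := invG Ga.
by symmetry; apply: invo_uniq => //; rewrite opC // muloV.
Qed.

Lemma invo1 : inv e = e.
Proof. by symmetry; apply: invo_uniq; rewrite // mulo1. Qed.

Lemma invoM a b : G a -> G b -> inv (op a b) = op (inv a) (inv b).
Proof.
move=> Ga Gb; have Gia := invG Ga; have Gib := invG Gb.
have Gab := opG Ga Gb; have Giab := opG Gia Gib.
symmetry; apply: invo_uniq => //.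
by rewrite (opA Ga Gb Giab) [op (inv a) _]opC // -(opA Gb) // muloV // mul1o // muloV.
Qed.

Lemma ler_mulo a b c d : G a -> G b -> G c -> G d -> a <= b -> c <= d ->
  op a c <= op b d.
Proof.
move=> Ga Gb Gc Gd le_ab le_cd; apply: (le_trans (ler_opl Ga Gb Gc le_ab)).
by rewrite ![op b _]opC //; apply: ler_opl.
Qed.

Lemma ler_invo a b : G a -> G b -> a <= b -> inv b <= inv a.
Proof.
move=> Ga Gb le_ab; have Gia := invG Ga; have Gib := invG Gb.
have := ler_mulo Gia Gia (opG Ga Gib) (opG Gb Gib) (lexx _) (ler_opl Ga Gb Gib le_ab).
by rewrite muloV // mulo1 // -opA // [op (inv a) a]opC // muloV // mul1o.
Qed.

Lemma divoG a b : G a -> G b -> G (alo_div op inv a b).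
Proof. by move=> Ga Gb; apply: opG => //; apply: invG. Qed.

Lemma divoo a : G a -> alo_div op inv a a = e.
Proof. exact: muloV. Qed.

Lemma divo_eq1 a b : G a -> G b -> alo_div op inv a b = e -> a = b.
Proof.
move=> Ga Gb ab_e; have Gib := invG Gb.
have : op (inv b) a = e by rewrite opC.
by move/(invo_uniq Gib Ga); rewrite invoK.
Qed.

Lemma invo_div a b : G a -> G b -> inv (alo_div op inv a b) = alo_div op inv b a.
Proof.
move=> Ga Gb; have Gib := invG Gb.
by rewrite /alo_div invoM // invoK // opC //; apply: invG.
Qed.

Lemma mulo_div a b c : G a -> G b -> G c ->
  op (alo_div op inv a c) (alo_div op inv c b) = alo_div op inv a b.
Proof.
move=> Ga Gb Gc; have Gic := invG Gc; have Gib := invG Gb.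
by rewrite /alo_div (opA Ga Gic (opG Gc Gib)) -(opA Gic Gc Gib) [op (inv c) c]opC //
  muloV // mul1o.
Qed.

Lemma normoG a : G a -> G (alo_norm inv a).
Proof. by move=> Ga; rewrite /alo_norm /Num.max; case: ifP => // _; apply: invG. Qed.

Lemma normoV a : G a -> alo_norm inv (inv a) = alo_norm inv a.
Proof. by move=> Ga; rewrite /alo_norm invoK // maxC. Qed.

Lemma normo_ge1 a : G a -> e <= alo_norm inv a.
Proof.
move=> Ga; rewrite le_max; case: (lerP e a) => //= /ltW le_ae.
by rewrite -invo1; apply: ler_invo.
Qed.

Lemma normo_eq1 a : G a -> alo_norm inv a = e -> a = e.
Proof.
rewrite /alo_norm => Ga norm_e; apply/eqP; rewrite eq_le.
have /andP[-> le_iae] : (a <= e) && (inv a <= e) by rewrite -ge_max norm_e.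
by rewrite -(invoK Ga) -invo1 ler_invo //; apply: invG.
Qed.

Lemma ler_normoM a b : G a -> G b ->
  alo_norm inv (op a b) <= op (alo_norm inv a) (alo_norm inv b).
Proof.
move=> Ga Gb; have Gia := invG Ga; have Gib := invG Gb.
have Na := normoG Ga; have Nb := normoG Gb.
by rewrite ge_max invoM // !ler_mulo // le_max lexx ?orbT.
Qed.

Definition alo_dist (a b : R) : R := alo_norm inv (alo_div op inv a b).

Lemma alo_distG a b : G a -> G b -> G (alo_dist a b).
Proof. by move=> Ga Gb; apply/normoG/divoG. Qed.

Lemma alo_dist_ge1 a b : G a -> G b -> e <= alo_dist a b.
Proof. by move=> Ga Gb; apply/normo_ge1/divoG. Qed.

Lemma alo_dist_eq1 a b : G a -> G b -> (alo_dist a b = e <-> a = b).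
Proof.
move=> Ga Gb; split=> [/(normo_eq1 (divoG Ga Gb))|->]; first exact: divo_eq1.
by rewrite /alo_dist divoo // /alo_norm invo1 maxxx.
Qed.

Lemma alo_distC a b : G a -> G b -> alo_dist a b = alo_dist b a.
Proof. by move=> Ga Gb; rewrite /alo_dist -invo_div // normoV //; apply: divoG. Qed.

Lemma alo_dist_triangle a b c : G a -> G b -> G c ->
  alo_dist a b <= op (alo_dist a c) (alo_dist c b).
Proof. by move=> Ga Gb Gc; rewrite /alo_dist -(mulo_div Ga Gb Gc) ler_normoM //; apply: divoG. Qed.

Lemma ler_max_mulo a1 a2 b1 b2 c1 c2 : G a1 -> G a2 -> G b1 -> G b2 ->
  c1 <= op a1 b1 -> c2 <= op a2 b2 ->
  Num.max c1 c2 <= op (Num.max a1 a2) (Num.max b1 b2).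
Proof.
have maxG x y : G x -> G y -> G (Num.max x y) by move=> Gx Gy; rewrite /Num.max; case: ifP.
move=> Ga1 Ga2 Gb1 Gb2 le_c1 le_c2.
have Ga := maxG _ _ Ga1 Ga2; have Gb := maxG _ _ Gb1 Gb2.
rewrite ge_max (le_trans le_c1) ?(le_trans le_c2) //;
  by apply: ler_mulo; rewrite // le_max lexx ?orbT.
Qed.

End RealAloGroup.

Lemma max_eq_lb (d : Order.disp_t) (T : orderType d) (m x y : T) :
  (m <= x)%O -> (m <= y)%O -> Order.max x y = m <-> x = m /\ y = m.
Proof.
move=> le_mx le_my; split=> [max_m|[-> ->]]; last exact: maxxx.
have /andP[le_xm le_ym] : (x <= m)%O && (y <= m)%O by rewrite -ge_max max_m.
by split; apply/eqP; rewrite eq_le ?le_xm ?le_ym.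
Qed.

Lemma dist_IGE (R : realType) (op : R -> R -> R) (inv : R -> R) (a b : R * R) :
  dist_IG op inv a b = Num.max (alo_dist op inv a.1 b.1) (alo_dist op inv a.2 b.2).
Proof. by []. Qed.

Theorem proposition7 (R : realType) (G : set R) (op : R -> R -> R) (e : R) (inv : R -> R) :
  real_alo_group G op e inv -> continuous_op G op -> open_interval G ->
  forall a b c : R * R, interval_G G a -> interval_G G b -> interval_G G c ->
  [/\ e <= dist_IG op inv a b,
      (dist_IG op inv a b = e <-> a = b),
      dist_IG op inv a b = dist_IG op inv b a &
      dist_IG op inv a b <= op (dist_IG op inv a c) (dist_IG op inv c b)].
Proof.
move=> aloG _ _ [a1 a2] [b1 b2] [c1 c2] [/= Ga1 [Ga2 _]] [/= Gb1 [Gb2 _]] [/= Gc1 [Gc2 _]].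
rewrite !dist_IGE /=; split.
- by rewrite le_max (alo_dist_ge1 aloG).
- rewrite max_eq_lb ?(alo_dist_ge1 aloG) // !(alo_dist_eq1 aloG) //.
  by split=> [[-> ->]|[-> ->]].
- by rewrite (alo_distC aloG Ga1) ?(alo_distC aloG Ga2).
- apply: (ler_max_mulo aloG);
    first [exact: (alo_distG aloG) | exact: (alo_dist_triangle aloG)].
Qed.
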